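(* Let $\mathcal R$ be a commutative ring with unit, $L\in\mathbb N$ and $\vec m=(m_0,\dots,m_L)\in\mathcal R^{L+1}$. Then ${}_{\vec m}\mathcal H=({}_{\vec m}\mathcal H_n)_{n\ge0}$ satisfies the homotopy axiom if and only if the ideal of $\mathcal R$ generated by $\{m_0,\dots,m_L\}$ is all of $\mathcal R$ (i.e. there are $r_0,\dots,r_L\in\mathcal R$ with $\sum_k r_km_k=1_{\mathcal R}$). In particular, for $\mathcal R=\mathbb Z$ the homotopy axiom holds iff $\gcd(m_0,\dots,m_L)=1$.
   Context: For a space $X$: $\mathcal S_n(X)$ = continuous maps $[0,1]^n\to X$ ($[0,1]^0=\{0\}$), $\mathcal K_n(X)$ the free $\mathcal R$-module on $\mathcal S_n(X)$, $\mathcal K_{-1}(X)=0$. For $n\ge1$, $T\in\mathcal S_n(X)$, $0\le i\le L$, $1\le j\le n$: $\langle T\rangle_{n,i,j}(x_1,\dots,x_{n-1})=T(x_1,\dots,x_{j-1},i/L,x_j,\dots,x_{n-1})$ (for $n=1$: $\langle T\rangle_{1,i,1}(0)=T(i/L)$). ${}_{\vec m}\partial_n(T)=\sum_{j=1}^n(-1)^{j+1}\sum_{i=0}^Lm_i\langle T\rangle_{n,i,j}$, extended linearly, ${}_{\vec m}\partial_0=0$; this is a chain complex and ${}_{\vec m}\mathcal H_n(X)=\ker{}_{\vec m}\partial_n/\operatorname{im}{}_{\vec m}\partial_{n+1}$, a functor of $X$ via $\mathcal K_n(f)(T)=f\circ T$. The homotopy axiom means: for all homotopic continuous $f\simeq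 g:X\to Y$, ${}_{\vec m}\mathcal H_n(f)={}_{\vec m}\mathcal H_n(g)$ for all $n\ge0$. *)

From HB Require Import structures.
From mathcomp Require Import all_boot all_order all_algebra.
From mathcomp Require Import all_classical all_reals all_analysis.
From mathcomp Require Import Rstruct Rstruct_topology.
Set Implicit Arguments. Unset Strict Implicit. Unset Printing Implicit Defensive.
Import Order.TTheory GRing.Theory Num.Theory.
Local Open Scope classical_set_scope.
Local Open Scope ring_scope.

Notation RR := Rdefinitions.R.

Definition cube_set (n : nat) : set 'rV[RR]_n :=
  [set x | forall i : 'I_n, 0 <= x ord0 i <= 1].
Arguments cube_set : clear implicits.
Definition cube (n : nat) : topologicalType := @set_type _ (cube_set n).

(* All maps [0,1]^n -> X; the singular n-cubes S_n(X) are the continuous ones. *)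
Definition cubemap (n : nat) (X : topologicalType) := cube n -> X.
HB.instance Definition _ n X := gen_eqMixin (cubemap n X).
HB.instance Definition _ n X := gen_choiceMixin (cubemap n X).

Definition ins_row n (j : 'I_n.+1) (t : RR) (x : 'rV[RR]_n) : 'rV[RR]_n.+1 :=
  \row_(k < n.+1) match unlift j k with None => t | Some k' => x ord0 k' end.

Lemma ins_row_cube n (j : 'I_n.+1) (t : RR) (x : cube n) :
  0 <= t <= 1 -> ins_row j t (val x) \in cube_set n.+1.
Proof.
move=> ht; apply/mem_set => k; rewrite /ins_row mxE.
case: (unlift j k) => [k'|//]; case: x => y /= /set_mem; exact.
Qed.

Lemma frac_in01 (L : nat) (i : 'I_L.+1) : 0 <= (i%:R / L%:R : RR) <= 1.
Proof.
have Hi : (i <= L)%N by rewrite -ltnS.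
case: L i Hi => [|L] i Hi; first by rewrite invr0 mulr0 lexx ler01.
apply/andP; split; first by rewrite divr_ge0 // ler0n.
by rewrite ler_pdivrMr ?ltr0Sn // mul1r ler_nat.
Qed.

(* <T>_{n,i,j} with j 0-based: T(x_1,..,x_{j}, i/L, x_{j+1},..) *)
Definition face (L : nat) n X (T : cubemap n.+1 X) (i : 'I_L.+1) (j : 'I_n.+1)
  : cubemap n X :=
  fun x => T (exist _ (ins_row j (i%:R / L%:R) (val x))
                     (ins_row_cube j x (frac_in01 i))).

(* chains: finitely supported R-valued functions on S_n(X), i.e. elements of
   the free R-module K_n(X) on the continuous cubes *)
Definition supp (Rg : pzRingType) n X (c : cubemap n X -> Rg) : set (cubemap n X) :=
  [set T | c T != 0].
Definition is_chain (Rg : pzRingType) n X (c : cubemap n X -> Rg) : Prop :=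
  finite_set (supp c) /\ (forall T, supp c T -> continuous T).

(* boundary of a single cube: sum_j (-1)^(j+1) sum_i m_i <T>_{i,j} (1-based j) *)
Definition bd_cube (Rg : pzRingType) (L : nat) (m : 'I_L.+1 -> Rg) n X
  (T : cubemap n.+1 X) : cubemap n X -> Rg :=
  fun S => \sum_(j < n.+1) \sum_(i < L.+1)
            ((-1) ^+ j * m i) *+ (face T i j == S).

Definition bd (Rg : pzRingType) (L : nat) (m : 'I_L.+1 -> Rg) n X
  (c : cubemap n.+1 X -> Rg) : cubemap n X -> Rg :=
  fun S => \sum_(T \in supp c) c T * bd_cube m T S.

Definition is_cycle (Rg : pzRingType) (L : nat) (m : 'I_L.+1 -> Rg) n X :
  (cubemap n X -> Rg) -> Prop :=
  match n as k return (cubemap k X -> Rg) -> Prop with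
  | 0 => fun _ => True
  | k.+1 => fun c => forall S, bd m c S = 0
  end.

Definition push (Rg : pzRingType) n (X Y : topologicalType) (f : X -> Y)
  (c : cubemap n X -> Rg) : cubemap n Y -> Rg :=
  fun S => \sum_(T \in [set T | supp c T /\ (f \o T : cubemap n Y) = S]) c T.

Definition homotopic (X Y : topologicalType) (f g : X -> Y) : Prop :=
  exists H : X * set_type (`[0, 1] : set RR) -> Y,
    continuous H /\
    (forall x t, val t = 0 -> H (x, t) = f x) /\
    (forall x t, val t = 1 -> H (x, t) = g x).

(* Homotopy axiom: for all homotopic continuous f ~ g : X -> Y and all n,
   _mH_n(f) = _mH_n(g), i.e. for every n-cycle c, K_n(f)c - K_n(g)c is a
   boundary. *)
Definition homotopy_axiom (Rg : pzRingType) (L : nat) (m : 'I_L.+1 -> Rg) : Prop :=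
  forall (X Y : topologicalType) (f g : X -> Y),
    continuous f -> continuous g -> homotopic f g ->
    forall (n : nat) (c : cubemap n X -> Rg),
      is_chain c -> is_cycle m c ->
      exists d : cubemap n.+1 Y -> Rg,
        is_chain d /\ forall S, push f c S - push g c S = bd m d S.

From HB Require Import structures.
From mathcomp Require Import all_boot all_order all_algebra.
From mathcomp Require Import all_classical all_reals all_analysis.
From mathcomp Require Import Rstruct Rstruct_topology.
From mathcomp Require Import finmap zify lra ring.
Set Implicit Arguments. Unset Strict Implicit. Unset Printing Implicit Defensive.
Import Order.TTheory GRing.Theory Num.Theory.
Local Open Scope classical_set_scope.
Local Open Scope ring_scope.

(* The homotopy H : f ~ g turns a cube T into the prism (t, x) |-> H (T x, q t)
   of one dimension more.  For the constant profile q = 0 every face in the new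
   direction is f o T; for the tent profile peaking at k/L the face at level k/L
   is g o T and the others are still f o T.  Hence the difference of the two
   prisms has boundary m_k (f o T - g o T) in the new direction, while its
   remaining faces are (signed) prisms over the faces of T, which cancel once
   summed over a cycle.  Weighting by r_k with sum_k r_k m_k = 1 yields a chain
   whose boundary is f_* c - g_* c.  Conversely, for the homotopic constant maps
   0, 1 : R -> R and the 0-cycle at the point 0, a 1-chain d bounding [0] - [1]
   gives r_i := the total d-weight of the cubes whose i-th face is the point 0,
   and evaluating the boundary of d at that point reads sum_i r_i m_i = 1. *)

Definition I01 : set RR := `[0, 1].

Definition clamp01 (t : RR) : RR := Num.min 1 (Num.max 0 t).

Lemma clamp01_in t : clamp01 t \in I01.
Proof.
apply/mem_set; rewrite /I01 /= in_itv /= le_min ler01 le_max lexx.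
by rewrite ge_min lexx.
Qed.

Lemma clamp01_0 : clamp01 0 = 0.
Proof. by rewrite /clamp01 max_r // min_r ?ler01. Qed.

Lemma continuous_clamp01 : continuous clamp01.
Proof.
have -> : clamp01 = (fun=> 1 : RR^o) \min ((fun=> 0 : RR^o) \max (id : RR -> RR^o)).
  by apply/funext.
move=> x; apply: continuous_min; first exact: cvg_cst.
by apply: continuous_max; [exact: cvg_cst | exact: cvg_id].
Qed.

Definition clamp01_pt (t : RR) : set_type I01 := exist _ (clamp01 t) (clamp01_in t).

Lemma continuous_clamp01_pt : continuous clamp01_pt.
Proof. by apply: continuous_comp_initial => x; exact: continuous_clamp01. Qed.

Definition row_tail n (x : 'rV[RR]_n.+1) : 'rV[RR]_n :=
  \row_(k < n) x ord0 (lift ord0 k).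

Lemma continuous_row_tail n : continuous (@row_tail n).
Proof.
have -> : @row_tail n = (rsubmx : 'rV[RR]_(1 + n) -> 'rV[RR]_n).
  apply/funext => x; apply/rowP => k; rewrite !mxE.
  by congr (x _ _); apply: val_inj.
exact: (@continuous_rsubmx RR 1 1 n).
Qed.

Lemma row_tail_cube n (x : cube n.+1) : row_tail (val x) \in cube_set n.
Proof. by apply/mem_set => k; rewrite mxE; case: x => y /= /set_mem. Qed.

Definition cube_tail n (x : cube n.+1) : cube n :=
  exist (fun v => v \in cube_set n) _ (row_tail_cube x).

Lemma continuous_cube_tail n : continuous (@cube_tail n).
Proof.
apply: continuous_comp_initial.
have -> : set_val \o @cube_tail n = @row_tail n \o (set_val : cube n.+1 -> _) by [].
move=> x; apply: continuous_comp; first exact: initial_continuous.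
exact: continuous_row_tail.
Qed.

Lemma continuous_pair (Z A B : topologicalType) (a : Z -> A) (b : Z -> B) :
  continuous a -> continuous b -> continuous (fun z => (a z, b z)).
Proof. by move=> ca cb z; apply: cvg_pair; [exact: ca | exact: cb]. Qed.

(* Clamping lets any continuous time profile q be used; the tent profile below
   leaves [0, 1]. *)
Definition prism (q : RR -> RR) n (X Y : topologicalType)
    (H : X * set_type I01 -> Y) (T : cubemap n X) : cubemap n.+1 Y :=
  fun x => H (T (cube_tail x), clamp01_pt (q (val x ord0 ord0))).

Lemma continuous_prism q n (X Y : topologicalType) (H : X * set_type I01 -> Y)
    (T : cubemap n X) :
  continuous q -> continuous H -> continuous T -> continuous (prism q H T).
Proof.
move=> cq cH cT.
have cp : continuous (fun z => (T (cube_tail z), clamp01_pt (q (val z ord0 ord0)))).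
  apply: (@continuous_pair _ _ _ (fun z => T (cube_tail z))) => z.
    exact/continuous_comp/cT/continuous_cube_tail.
  apply: continuous_comp; last exact: continuous_clamp01_pt.
  apply: continuous_comp; last exact: cq.
  apply: (@continuous_comp _ _ _ (set_val : cube n.+1 -> 'rV[RR]_n.+1)
                                 (fun v => v ord0 ord0)).
    exact: initial_continuous.
  exact: coord_continuous.
by move=> x; apply: continuous_comp (cp x) (cH _).
Qed.

Lemma row_tail_ins0 n t (v : 'rV[RR]_n) : row_tail (ins_row ord0 t v) = v.
Proof. by apply/rowP => k; rewrite !mxE liftK. Qed.

Lemma ins_row0_head n t (v : 'rV[RR]_n) : ins_row ord0 t v ord0 ord0 = t.
Proof. by rewrite mxE unlift_none. Qed.

Lemma row_tail_ins_lift n (j : 'I_n.+1) t (v : 'rV[RR]_n.+1) :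
  row_tail (ins_row (lift ord0 j) t v) = ins_row j t (row_tail v).
Proof.
apply/rowP => k; rewrite !mxE; case: (unliftP j k) => [k'|] ->; last first.
  by rewrite unlift_none.
have -> : lift ord0 (lift j k') = lift (lift ord0 j) (lift ord0 k').
  by apply: val_inj => /=; rewrite /bump /= !add1n ltnS; lia.
by rewrite liftK mxE.
Qed.

Lemma ins_row_lift_head n (j : 'I_n.+1) t (v : 'rV[RR]_n.+1) :
  ins_row (lift ord0 j) t v ord0 ord0 = v ord0 ord0.
Proof.
rewrite mxE; case: (unliftP (lift ord0 j) ord0) => [k' /(congr1 val)|/(congr1 val)//].
by rewrite /= /bump /= => e; congr (v _ _); apply: val_inj => /=; lia.
Qed.

Section PrismFaces.
Variables (L : nat) (q : RR -> RR) (X Y : topologicalType).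
Variable H : X * set_type I01 -> Y.

Lemma face_prism_ord0 n (T : cubemap n X) (i : 'I_L.+1) :
  face (prism q H T) i ord0 = fun x => H (T x, clamp01_pt (q (i%:R / L%:R))).
Proof.
apply/funext => x; rewrite /face /prism /=.
by congr (H (T _, clamp01_pt (q _))); [apply: val_inj; rewrite /= row_tail_ins0|
  rewrite ins_row0_head].
Qed.

Lemma face_prism_lift n (T : cubemap n.+1 X) (i : 'I_L.+1) (j : 'I_n.+1) :
  face (prism q H T) i (lift ord0 j) = prism q H (face T i j).
Proof.
apply/funext => x; rewrite /face /prism /=.
congr (H (T _, clamp01_pt (q _))); last by rewrite ins_row_lift_head.
by apply: val_inj; rewrite /= row_tail_ins_lift.
Qed.

End PrismFaces.

Definition tent (L k : nat) (t : RR) : RR := 1 - `|L%:R * t - k%:R|.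

Lemma continuous_tent L k : continuous (tent L k).
Proof.
have -> : tent L k = (fun=> 1 : RR^o) -
    (Num.norm \o ((fun t : RR => (L%:R * t : RR^o)) - (fun=> k%:R : RR^o))).
  by apply/funext.
move=> x; apply: (@continuousB RR RR^o RR); first exact: cvg_cst.
apply: continuous_comp; last exact: (@norm_continuous _ RR^o).
apply: (@continuousB RR RR^o RR); last exact: cvg_cst.
exact: (@mulrl_continuous RR).
Qed.

Lemma clamp01_tent L (i k : 'I_L.+1) : clamp01 (tent L k (i%:R / L%:R)) = (i == k)%:R.
Proof.
rewrite /clamp01 /tent.
have -> : L%:R * (i%:R / L%:R) = i%:R :> RR.
  case: L i k => [|L] i k; first by rewrite mul0r; case: i => [[|]].
  by rewrite mulrC divfK // pnatr_eq0.
case: eqP => [->|/eqP ik].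
  by rewrite subrr normr0 subr0 max_r ?ler01 // min_r.
have dist1 : 1 <= `|i%:R - k%:R : RR|.
  have [ik'|ki] := ltnP i k.
    have : (i.+1%:R <= k%:R :> RR) by rewrite ler_nat.
    rewrite -normrN opprB -addn1 natrD => ?; apply: le_trans (ler_norm _); lra.
  have : (k.+1%:R <= i%:R :> RR) by rewrite ler_nat ltn_neqAle eq_sym ik.
  rewrite -addn1 natrD => ?; apply: le_trans (ler_norm _); lra.
by rewrite max_l ?min_r ?ler01 //; lra.
Qed.

Definition formal_sum (Rg : nmodType) (I : eqType) (A : eqType)
    (s : seq I) (w : I -> Rg) (e : I -> A) (z : A) : Rg :=
  \sum_(x <- s) w x *+ (e x == z).

Section FormalSum.
Variables (Rg : pzSemiRingType) (I : eqType) (A : eqType).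
Variables (s : seq I) (w : I -> Rg) (e : I -> A).

Lemma formal_sum_out z : z \notin map e s -> formal_sum s w e z = 0.
Proof.
move=> zNs; rewrite /formal_sum big_seq big1 // => x xs.
by rewrite (negPf (contraNneq _ zNs)) // => <-; exact: map_f.
Qed.

Lemma formal_sum_regroup (u : seq A) (G : A -> Rg) :
  uniq u -> {subset map e s <= u} ->
  \sum_(z <- u) formal_sum s w e z * G z = \sum_(x <- s) w x * G (e x).
Proof.
move=> uu su; under eq_bigr => z _ do rewrite /formal_sum mulr_suml.
rewrite exchange_big; apply: eq_big_seq => x xs.
rewrite (bigD1_seq (e x)) ?su ?map_f //= eqxx mulr1n big1 ?addr0 // => z.
by rewrite eq_sym => /negPf ->; rewrite mul0r.
Qed.

Lemma formal_sum_comp_eq0 (B : eqType) (Q : A -> B) y :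
  (forall z, formal_sum s w e z = 0) -> formal_sum s w (Q \o e) y = 0.
Proof.
move=> e0; transitivity (\sum_(x <- s) w x * (Q (e x) == y)%:R).
  by apply: eq_bigr => x _; rewrite mulr_natr.
rewrite -(@formal_sum_regroup (undup (map e s)) (fun z => (Q z == y)%:R)).
- by rewrite big1 // => z _; rewrite e0 mul0r.
- exact: undup_uniq.
- by move=> z; rewrite mem_undup.
Qed.

End FormalSum.

Section Chains.
Variable Rg : pzRingType.

Lemma bdE_seq L (m : 'I_L.+1 -> Rg) n X (c : cubemap n.+1 X -> Rg)
    (t : seq (cubemap n.+1 X)) S :
  uniq t -> (forall T, c T != 0 -> T \in t) ->
  bd m c S = \sum_(T <- t) c T * bd_cube m T S.
Proof.
move=> ut ct; apply: fsbig_fwiden => // T [_ /negP].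
by rewrite negbK => /eqP /= ->; rewrite mul0r.
Qed.

Lemma pushE_seq n (X Y : topologicalType) (f : X -> Y) (c : cubemap n X -> Rg)
    (t : seq (cubemap n X)) S :
  uniq t -> (forall T, c T != 0 -> T \in t) ->
  push f c S = formal_sum t c (fun T => f \o T) S.
Proof.
move=> ut ct; rewrite /push /formal_sum.
rewrite (eq_fsbigr (fun T => c T *+ ((f \o T : cubemap n Y) == S))); last first.
  by move=> T /set_mem [_ ->]; rewrite eqxx.
apply: fsbig_fwiden => // T.
  by move=> [/ct].
move=> [_] /=; case: eqP => [->|_]; last by rewrite mulr0n.
by move/not_andP => [/negP|//]; rewrite negbK mulr1n => /eqP.
Qed.

Lemma is_chain_formal_sum (I : eqType) n X (s : seq I) (w : I -> Rg)
    (e : I -> cubemap n X) :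
  (forall x, x \in s -> continuous (e x)) -> is_chain (formal_sum s w e).
Proof.
move=> econt; split.
  apply: (sub_finite_set _ (finite_seq (map e s))) => T /= wT.
  by apply: contraNT wT => /formal_sum_out ->.
move=> T /= wT; have /mapP[x xs ->] : T \in map e s.
  by apply: contraNT wT => /formal_sum_out ->.
exact: econt.
Qed.

End Chains.

Lemma bd_formal_sum (Rg : pzRingType) L (m : 'I_L.+1 -> Rg) (I : eqType) n X
    (s : seq I) (w : I -> Rg) (e : I -> cubemap n.+1 X) S :
  bd m (formal_sum s w e) S = \sum_(x <- s) w x * bd_cube m (e x) S.
Proof.
rewrite (bdE_seq _ _ (undup_uniq (map e s))).
  by apply: formal_sum_regroup => [|T]; rewrite ?undup_uniq ?mem_undup.
by move=> T; rewrite mem_undup; apply: contraR => /formal_sum_out ->.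
Qed.

Section Boundary.
Variables (Rg : pzRingType) (L : nat) (m : 'I_L.+1 -> Rg).

Definition bd_cube_lateral n Y (P : cubemap n.+1 Y) (S : cubemap n Y) : Rg :=
  \sum_(j < n) \sum_(i < L.+1)
    ((-1) ^+ (lift ord0 j) * m i) *+ (face P i (lift ord0 j) == S).

Lemma bd_cube_recl n Y (P : cubemap n.+1 Y) S :
  bd_cube m P S = \sum_(i < L.+1) m i *+ (face P i ord0 == S) + bd_cube_lateral P S.
Proof.
by rewrite /bd_cube big_ord_recl; under eq_bigr => i _ do rewrite expr0 mul1r.
Qed.

Lemma sum_bd_cube_comp n X (B : eqType) (Q : cubemap n X -> B)
    (c : cubemap n.+1 X -> Rg) (s : seq (cubemap n.+1 X)) z :
  \sum_(T <- s) c T * \sum_(j < n.+1) \sum_(i < L.+1)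
      ((-1) ^+ j * m i) *+ (Q (face T i j) == z) =
  formal_sum [seq (T, p) | T <- s, p <- enum {: 'I_n.+1 * 'I_L.+1}]
    (fun x => c x.1 * ((-1) ^+ x.2.1 * m x.2.2))
    (fun x => Q (face x.1 x.2.2 x.2.1)) z.
Proof.
rewrite /formal_sum big_allpairs; apply: eq_bigr => T _.
rewrite big_enum pair_bigA mulr_sumr; apply: eq_bigr => -[j i] _.
by rewrite mulrnAr.
Qed.

End Boundary.

Lemma sum_prism_lateral_cycle (Rg : pzRingType) L (m : 'I_L.+1 -> Rg) q n
    (X Y : topologicalType) (H : X * set_type I01 -> Y) (c : cubemap n X -> Rg)
    (s : seq (cubemap n X)) S :
  uniq s -> (forall T, c T != 0 -> T \in s) -> is_cycle m c ->
  \sum_(T <- s) c T * bd_cube_lateral m (prism q H T) S = 0.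
Proof.
case: n c s S => [|n] c s S us cs cyc.
  by rewrite big1 // => T _; rewrite /bd_cube_lateral big_ord0 mulr0.
have lateralE T : bd_cube_lateral m (prism q H T) S =
    - \sum_(j < n.+1) \sum_(i < L.+1) ((-1) ^+ j * m i) *+ (prism q H (face T i j) == S).
  rewrite /bd_cube_lateral -sumrN; apply: eq_bigr => j _; rewrite -sumrN.
  apply: eq_bigr => i _.
  by rewrite face_prism_lift lift0 exprS mulN1r mulNr mulNrn.
under eq_bigr => T _ do rewrite lateralE mulrN.
rewrite sumrN sum_bd_cube_comp; apply/eqP; rewrite oppr_eq0; apply/eqP.
apply: (formal_sum_comp_eq0 (prism q H)) => z.
by rewrite -(sum_bd_cube_comp m id) -(bdE_seq _ _ us cs) cyc.
Qed.

Section HomotopyPrism.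
Variables (X Y : topologicalType) (f g : X -> Y) (H : X * set_type I01 -> Y).
Hypothesis H_0 : forall x t, val t = 0 -> H (x, t) = f x.
Hypothesis H_1 : forall x t, val t = 1 -> H (x, t) = g x.

Lemma face_prism_cst0 L n (T : cubemap n X) (i : 'I_L.+1) :
  face (prism (fun=> 0) H T) i ord0 = f \o T.
Proof. by rewrite face_prism_ord0; apply/funext => x; rewrite H_0 //= clamp01_0. Qed.

Lemma face_prism_tent L n (T : cubemap n X) (i k : 'I_L.+1) :
  face (prism (tent L k) H T) i ord0 = (if i == k then g else f) \o T.
Proof.
rewrite face_prism_ord0; apply/funext => x.
have := clamp01_tent i k; case: eqP => _ e.
  by rewrite H_1 //= e.
by rewrite H_0 //= e.
Qed.

Lemma bd_cube_prism_sub (Rg : pzRingType) L (m : 'I_L.+1 -> Rg) n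
    (T : cubemap n X) (k : 'I_L.+1) S :
  bd_cube m (prism (fun=> 0) H T) S - bd_cube m (prism (tent L k) H T) S =
  m k * (((f \o T : cubemap n Y) == S)%:R - ((g \o T : cubemap n Y) == S)%:R) +
  (bd_cube_lateral m (prism (fun=> 0) H T) S -
   bd_cube_lateral m (prism (tent L k) H T) S).
Proof.
rewrite !bd_cube_recl opprD addrACA -sumrB.
under eq_bigr => i _ do rewrite face_prism_cst0 face_prism_tent.
rewrite (bigD1 k) //= eqxx big1 ?addr0; first by rewrite mulrBr !mulr_natr.
by move=> i /negPf ->; rewrite subrr.
Qed.

End HomotopyPrism.

Section PrismChain.
Variables (Rg : comPzRingType) (L : nat) (m r : 'I_L.+1 -> Rg).
Variables (X Y : topologicalType) (H : X * set_type I01 -> Y) (n : nat).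
Variables (c : cubemap n X -> Rg) (s : seq (cubemap n X)).

Definition prism_chain : cubemap n.+1 Y -> Rg :=
  formal_sum [seq (T, kb) | T <- s, kb <- enum {: 'I_L.+1 * bool}]
    (fun x => (-1) ^+ x.2.2 * (c x.1 * r x.2.1))
    (fun x => prism (if x.2.2 then tent L x.2.1 else fun=> 0) H x.1).

Lemma is_chain_prism_chain :
  continuous H -> (forall T, T \in s -> continuous T) -> is_chain prism_chain.
Proof.
move=> cH cs; apply: is_chain_formal_sum => -[T [k b]] /allpairsP[[T' [k' b']]].
move=> /= [T's _ [-> -> ->]]; apply: continuous_prism => //; last exact: cs.
by case: b'; [exact: continuous_tent | exact: cst_continuous].
Qed.

Lemma bd_prism_chain S :
  bd m prism_chain S = \sum_(T <- s) \sum_(k < L.+1) (c T * r k) *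
    (bd_cube m (prism (fun=> 0) H T) S - bd_cube m (prism (tent L k) H T) S).
Proof.
rewrite bd_formal_sum big_allpairs; apply: eq_bigr => T _.
rewrite big_enum /= -(pair_bigA _ (fun (k : 'I_L.+1) (b : bool) =>
  (-1) ^+ b * (c T * r k) * bd_cube m (prism (if b then tent L k else fun=> 0) H T) S)).
apply: eq_bigr => k _; rewrite big_bool /= expr0 expr1 mulN1r mul1r.
by rewrite mulrBr addrC mulNr.
Qed.

Lemma sum_prism_chain_lateral S :
  uniq s -> (forall T, c T != 0 -> T \in s) -> is_cycle m c ->
  \sum_(T <- s) \sum_(k < L.+1) (c T * r k) *
    (bd_cube_lateral m (prism (fun=> 0) H T) S -
     bd_cube_lateral m (prism (tent L k) H T) S) = 0.
Proof.
move=> us cs cyc; rewrite exchange_big big1 // => k _.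
under eq_bigr => T _ do rewrite [c T * r k]mulrC -mulrA mulrBr.
by rewrite -mulr_sumr sumrB !(sum_prism_lateral_cycle _ _ _ us cs cyc) subrr mulr0.
Qed.

End PrismChain.

Lemma homotopy_axiom_of_unit_ideal (Rg : comPzRingType) L (m r : 'I_L.+1 -> Rg) :
  \sum_(k < L.+1) r k * m k = 1 -> homotopy_axiom m.
Proof.
move=> rm1 X Y f g _ _ [H [cH [H_0 H_1]]] n c [c_fin c_cont] c_cycle.
pose s : seq (cubemap n X) := fset_set (supp c).
have cs T : c T != 0 -> T \in s by move=> cT; rewrite in_fset_set //; apply/mem_set.
have sc T : T \in s -> supp c T by rewrite in_fset_set // => /set_mem.
exists (prism_chain r H c s); split.
  by apply: is_chain_prism_chain => // T /sc /c_cont.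
move=> S; rewrite !(pushE_seq _ _ (fset_uniq _) cs) bd_prism_chain.
under eq_bigr => T _ do under eq_bigr => k _ do rewrite (bd_cube_prism_sub H_0 H_1) mulrDr.
under eq_bigr => T _ do rewrite big_split /=.
rewrite big_split /= sum_prism_chain_lateral ?fset_uniq // addr0.
rewrite /formal_sum -sumrB; apply: eq_bigr => T _.
set d := _%:R - _%:R.
transitivity (c T * d * \sum_(k < L.+1) r k * m k).
  by rewrite rm1 mulr1 mulrBr !mulr_natr.
by rewrite mulr_sumr; apply: eq_bigr => k _; ring.
Qed.

Lemma unit_ideal_of_homotopy_axiom (Rg : pzRingType) L (m : 'I_L.+1 -> Rg) :
  homotopy_axiom m -> exists r : 'I_L.+1 -> Rg, \sum_(k < L.+1) r k * m k = 1.
Proof.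
move=> ha; pose T0 : cubemap 0 RR := fun=> 0.
pose c : cubemap 0 RR -> Rg := fun T => (T == T0)%:R.
have c_supp T : c T != 0 -> T \in [:: T0].
  by rewrite /c mem_seq1; have [|_] := eqVneq T T0; rewrite ?mulr0n ?eqxx.
have c_chain : is_chain c.
  split; first by apply: (sub_finite_set _ (finite_seq [:: T0])) => T /c_supp.
  by move=> T /c_supp; rewrite inE => /eqP ->; exact: cst_continuous.
have homotopic01 : homotopic (fun _ : RR => 0 : RR) (fun _ : RR => 1 : RR).
  exists (fun p : RR * set_type I01 => val p.2); split=> //.
  move=> p; apply: continuous_comp; first exact: cvg_snd.
  exact: initial_continuous.
have [d [[d_fin _] d_bd]] :=
  ha RR RR _ _ (@cst_continuous _ _ _) (@cst_continuous _ _ _) homotopic01 0 c c_chain I.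
pose s : seq (cubemap 1 RR) := fset_set (supp d).
have d_supp T : d T != 0 -> T \in s by move=> dT; rewrite in_fset_set //; apply/mem_set.
exists (fun i => formal_sum s d (fun T => face T i ord0) T0).
have {d_bd} := d_bd T0; rewrite !(pushE_seq _ _ _ c_supp) // (bdE_seq _ _ (fset_uniq _) d_supp).
have T10 : ((fun _ : RR => 1 : RR) \o T0 : cubemap 0 RR) != T0.
  have pt : (0 : 'rV[RR]_0) \in cube_set 0 by apply/mem_set => -[].
  by apply/eqP => /(congr1 (fun h : cubemap 0 RR => h (exist _ 0 pt)))/eqP; rewrite oner_eq0.
rewrite /formal_sum !big_seq1 /c eqxx (negPf T10) /= mulr1n mulr0n subr0.
move=> bd1; apply: etrans (esym bd1).
under eq_bigr => i _ do rewrite mulr_suml.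
rewrite exchange_big /=; apply: eq_bigr => T _.
rewrite /bd_cube big_ord1 mulr_sumr; apply: eq_bigr => i _.
by rewrite expr0 mul1r mulrnAl mulrnAr.
Qed.

Lemma dvdz_big_gcdz n (m : 'I_n -> int) (k : 'I_n) : (\big[gcdz/0]_(i < n) m i %| m k)%Z.
Proof.
elim: n m k => [|n IH] m k; first by case: k.
rewrite big_ord_recl; case: (unliftP ord0 k) => [k' ->|->]; last exact: dvdz_gcdl.
exact: dvdz_trans (dvdz_gcdr _ _) (IH _ _).
Qed.

Lemma big_gcdz_bezout n (m : 'I_n -> int) :
  exists r : 'I_n -> int, \sum_(k < n) r k * m k = \big[gcdz/0]_(i < n) m i.
Proof.
elim: n m => [|n IH] m; first by exists (fun=> 0); rewrite !big_ord0.
have [r hr] := IH (fun i => m (lift ord0 i)).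
have [u [v huv]] := Bezoutz (m ord0) (\big[gcdz/0]_(i < n) m (lift ord0 i)).
exists (fun k => if unlift ord0 k is Some k' then v * r k' else u).
rewrite big_ord_recl [RHS]big_ord_recl -huv -hr unlift_none mulr_sumr.
by congr (_ + _); apply: eq_bigr => k _; rewrite liftK mulrA.
Qed.

Lemma unit_ideal_int_gcd L (m : 'I_L.+1 -> int) :
  (exists r : 'I_L.+1 -> int, \sum_(k < L.+1) r k * m k = 1) <->
  \big[gcdz/0]_(k < L.+1) m k = 1.
Proof.
split=> [[r rm1]|gcd1]; last first.
  by have [r rm] := big_gcdz_bezout m; exists r; rewrite rm.
have : (\big[gcdz/0]_(k < L.+1) m k %| \sum_(k < L.+1) r k * m k)%Z.
  by apply: rpred_sum => k _; apply/dvdz_mull/dvdz_big_gcdz.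
by rewrite rm1 dvdz1 big_ord_recl /gcdz /= => /eqP ->.
Qed.

Lemma homotopy_axiom_iff_unit_ideal (Rg : comPzRingType) L (m : 'I_L.+1 -> Rg) :
  homotopy_axiom m <-> exists r : 'I_L.+1 -> Rg, \sum_(k < L.+1) r k * m k = 1.
Proof.
split; first exact: unit_ideal_of_homotopy_axiom.
by move=> [r rm1]; exact: homotopy_axiom_of_unit_ideal rm1.
Qed.

Theorem mainTheorem4 :
  (forall (Rg : comPzRingType) (L : nat) (m : 'I_L.+1 -> Rg),
      homotopy_axiom m <->
      exists r : 'I_L.+1 -> Rg, \sum_(k < L.+1) r k * m k = 1) /\
  (forall (L : nat) (m : 'I_L.+1 -> int),
      homotopy_axiom m <-> \big[gcdz/0]_(k < L.+1) m k = 1).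
Proof.
split; first exact: homotopy_axiom_iff_unit_ideal.
move=> L m; exact: iff_trans (homotopy_axiom_iff_unit_ideal m) (unit_ideal_int_gcd m).
Qed.
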